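(* Let $\Gamma=(V,E)$ be a finite multigraph without loops, with arc set $A=A(\Gamma)$, and let $U=SC'$ be a flip-flop coined QW on $\mathcal{H}_A$ whose coin is $C'=\bigoplus_{v\in V}C_v$, where each $C_v=2\ket{\alpha^{(v)}}\bra{\alpha^{(v)}}-I_{\mathcal{H}_v}$ is a generalized Grover operator on $\mathcal{H}_v=\mathrm{span}\{\ket{a}:o(a)=v\}$ with $\ket{\alpha^{(v)}}\in\mathcal{H}_v$ a unit vector. Let $S(\Gamma)$ be the subdivision graph of $\Gamma$, viewed as the bipartite graph with parts $X=V$ and $Y=E$, and let $\mathcal{U}_\eta:\mathcal{H}_A\to\mathcal{H}_{E(S(\Gamma))}$ be the unitary defined by $\mathcal{U}_\eta\ket{a}=\ket{o(a)}\otimes\ket{\{a,\bar a\}}$. Then there is an extended Szegedy walk with evolution operator $W$ on $\mathcal{H}^{|V|}\otimes\mathcal{H}^{|E|}$ for the bipartite graph $S(\Gamma)$ such that $$U=\mathcal{U}_\eta^{-1}\,W|_{\mathcal{H}_{E(S(\Gamma))}}\,\mathcal{U}_\eta .$$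
   Context: Multigraph and arcs: each edge $e\in E$ is identified with a pair of opposite arcs $\{a,\bar a\}$; $A$ is the set of all such arcs, $o(a),t(a)\in V$ denote origin and terminal vertex of $a$, with $o(\bar a)=t(a)$, $t(\bar a)=o(a)$. $\mathcal{H}_A$ is the Hilbert space with orthonormal basis $\{\ket{a}:a\in A\}$ (equivalently the basis $\ket{v,j}$, $v\in V$, $0\le j<d_v$, one vector per vertex and incident edge-end). Flip-flop coined QW: $U=SC'$ with shift $S\ket{a}=\ket{\bar a}$ and coin $C'$ a direct sum of operators $C_v$ on the subspaces $\mathcal{H}_v=\mathrm{span}\{\ket{a}:o(a)=v\}$. A generalized Grover operator on $\mathcal{H}_v$ is $2\ket{\psi}\bra{\psi}-I_{\mathcal{H}_v}$ for a unit vector $\ket{\psi}\in\mathcal{H}_v$. Subdivision graph $S(\Gamma)$: vertex set $V\cup E$, edge set $\{\{v,e\}: v\in V, e\in E, v\in e\}$ (a new vertex is inserted in the middle of each edge); it is bipartite with parts $X=V$, $Y=E$, and $\mathcal{H}_{E(S(\Gamma))}$ denotes the subspace of $\mathcal{H}^{|V|}\otimes\mathcal{H}^{|E|}$ spanned by $\{\ket{v}\otimes\ket{e}: v\in e\}$. Extended Szegedy QW on a connected bipartite graph $(X,Y,E')$ with biadjacency matrix $M$: take right-stochastic $P=(p_{xy})_{x\in X,y\in Y}$ and $Q=(q_{yx})_{y\in Y,x\in X}$ with $M_{x,y}=0\Rightarrow p_{xy}=q_{yx}=0$, real phases $\theta_{xy},\theta'_{xy}$, vectors $\ket{\phi_x}=\sum_{y}\sqrt{p_{xy}}e^{i\theta_{xy}}\ket{x}\otimes\ket{y}$,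 $\ket{\psi_y}=\sum_x\sqrt{q_{yx}}e^{i\theta'_{xy}}\ket{x}\otimes\ket{y}$ in $\mathcal{H}^{|X|}\otimes\mathcal{H}^{|Y|}$, and $W=R_1R_0$ with $R_0=2\sum_x\ket{\phi_x}\bra{\phi_x}-I$, $R_1=2\sum_y\ket{\psi_y}\bra{\psi_y}-I$. *)

From HB Require Import structures.
From mathcomp Require Import all_boot all_order all_algebra.
From mathcomp Require Import complex.
From mathcomp Require Import reals trigo.
Set Implicit Arguments.
Unset Strict Implicit.
Unset Printing Implicit Defensive.
Import Order.TTheory GRing.Theory Num.Theory.
Local Open Scope ring_scope.
Local Open Scope complex_scope.

(* A vector of the Hilbert space with orthonormal basis {|i> : i in I}
   is given by its coordinates; an operator H_J -> H_I by its matrix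
   entries  M i j = <i|M|j>. *)
Definition vec (R : realType) (I : finType) := I -> R[i].
Definition op (R : realType) (I J : finType) := I -> J -> R[i].

Definition opmul (R : realType) (I J K : finType) (M : op R I J) (N : op R J K)
  : op R I K := fun i k => \sum_(j : J) M i j * N j k.
Definition opid (R : realType) (I : finType) : op R I I :=
  fun i j => (i == j)%:R.
Definition adjoint (R : realType) (I J : finType) (M : op R I J) : op R J I :=
  fun j i => (M i j)^*.
Definition opapply (R : realType) (I J : finType) (M : op R I J) (v : vec R J)
  : vec R I := fun i => \sum_(j : J) M i j * v j.
Definition sum_ketbra (R : realType) (X I : finType) (phi : X -> vec R I)
  : op R I I := fun i j => \sum_(x : X) phi x i * (phi x j)^*.
Definition reflection (R : realType) (I : finType) (P : op R I I) : op R I I :=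
  fun i j => 2 * P i j - opid R i j.

(* A : arcs, o : origin, rev : a |-> bar a, edge : a |-> {a, bar a} in E.
   t(a) := o (rev a). *)
Definition loopless_multigraph (V E A : finType)
  (o : A -> V) (rev : A -> A) (edge : A -> E) : Prop :=
  [/\ involutive rev,
      (forall a, o (rev a) != o a),
      (forall a b, edge a = edge b <-> (b = a \/ b = rev a)) &
      (forall e, exists a, edge a = e)].

Definition unit_vector_at (R : realType) (V A : finType) (o : A -> V)
  (v : V) (alpha : vec R A) : Prop :=
  (forall a, o a != v -> alpha a = 0) /\
  \sum_(a | o a == v) `|alpha a| ^+ 2 = 1.

(* C_v = 2|alpha^(v)><alpha^(v)| - I_{H_v}, as an operator on H_v (a, b with o a = o b = v) *)
Definition grover_at (R : realType) (V A : finType) (alpha : V -> vec R A) (v : V)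
  : op R A A := fun a b => 2 * (alpha v a * (alpha v b)^*) - (a == b)%:R.

Definition coin (R : realType) (V A : finType) (o : A -> V) (alpha : V -> vec R A)
  : op R A A := fun a b => if o a == o b then grover_at alpha (o a) a b else 0.

Definition shift (R : realType) (A : finType) (rev : A -> A) : op R A A :=
  fun a b => (a == rev b)%:R.

Definition flipflop_QW (R : realType) (V A : finType) (o : A -> V) (rev : A -> A)
  (alpha : V -> vec R A) : op R A A :=
  opmul (shift R rev) (coin o alpha).

Definition sub_incident (V E A : finType) (o : A -> V) (edge : A -> E)
  (v : V) (e : E) : bool := [exists a, (o a == v) && (edge a == e)].

(* H_{E(S(Gamma))} = span{|v> (x) |e> : v in e} inside H^{|V|} (x) H^{|E|} *)
Definition in_HES (R : realType) (V E A : finType) (o : A -> V) (edge : A -> E)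
  (psi : vec R (V * E)%type) : Prop :=
  forall v e, psi (v, e) != 0 -> sub_incident o edge v e.

Definition U_eta (R : realType) (V E A : finType) (o : A -> V) (edge : A -> E)
  : op R (V * E)%type A :=
  fun p a => ((p.1 == o a) && (p.2 == edge a))%:R.

Definition right_stochastic (R : realType) (X Y : finType) (P : X -> Y -> R) : Prop :=
  (forall x y, 0 <= P x y) /\ (forall x, \sum_(y : Y) P x y = 1).

Definition phase (R : realType) (t : R) : R[i] := cos t +i* sin t.

Definition sz_phi (R : realType) (X Y : finType) (P : X -> Y -> R)
  (theta : X -> Y -> R) (x : X) : vec R (X * Y)%type :=
  fun p => if p.1 == x then (Num.sqrt (P x p.2))%:C * phase (theta x p.2) else 0.

Definition sz_psi (R : realType) (X Y : finType) (Q : Y -> X -> R)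
  (theta' : X -> Y -> R) (y : Y) : vec R (X * Y)%type :=
  fun p => if p.2 == y then (Num.sqrt (Q y p.1))%:C * phase (theta' p.1 y) else 0.

Definition szegedy_W (R : realType) (X Y : finType) (P : X -> Y -> R) (Q : Y -> X -> R)
  (theta theta' : X -> Y -> R) : op R (X * Y)%type (X * Y)%type :=
  opmul (reflection (sum_ketbra (sz_psi Q theta')))
        (reflection (sum_ketbra (sz_phi P theta))).

Definition is_extended_szegedy_W (R : realType) (X Y : finType) (M : X -> Y -> bool)
  (W : op R (X * Y)%type (X * Y)%type) : Prop :=
  exists (P : X -> Y -> R) (Q : Y -> X -> R) (theta theta' : X -> Y -> R),
    [/\ right_stochastic P, right_stochastic Q,
        (forall x y, ~~ M x y -> P x y = 0 /\ Q y x = 0) &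
        W = szegedy_W P Q theta theta'].

From HB Require Import structures.
From mathcomp Require Import all_boot all_order all_algebra.
From mathcomp Require Import complex.
From mathcomp Require Import reals trigo.
From mathcomp Require Import ring lra.
From Stdlib Require Import FunctionalExtensionality.
Import Order.TTheory GRing.Theory Num.Theory.
Local Open Scope ring_scope.
Local Open Scope complex_scope.

(* The arcs embed into the incidences of the subdivision graph by
   a |-> (o a, {a, bar a}), and U_eta is this embedding.  Take p_{v e} and
   theta_{v e} to be the modulus squared and the argument of alpha^(v)_a for
   the unique arc a leaving v along e: then |phi_v> = U_eta |alpha^(v)>, so
   on the image of U_eta the reflection R_0 acts as the coin C'.  Take
   q_{e v} = 1/2 at both ends of e and theta' = 0: then R_1 maps (v, e) to
   (w, e), w the other end of e, i.e. it acts as the shift S.  Hence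
   U_eta^* R_1 R_0 U_eta = S C'.  Since every |phi_x>, |psi_y> is supported
   on incident pairs, both reflections, hence W, preserve H_{E(S(Gamma))}. *)

(* At z = 0 the division by the zero modulus gives a junk angle, harmless
   since the modulus vanishes. *)
Definition carg {R : realType} (z : R[i]) : R :=
  let r := Num.sqrt (complex.Re z ^+ 2 + complex.Im z ^+ 2) in
  if 0 <= complex.Im z then acos (complex.Re z / r) else - acos (complex.Re z / r).

Lemma polar_form (R : realType) (z : R[i]) :
  (Num.sqrt (complex.Re z ^+ 2 + complex.Im z ^+ 2))%:C * phase (carg z) = z.
Proof.
case: z => a b; rewrite /carg /=.
have [h0|hn0] := eqVneq (a ^+ 2 + b ^+ 2) 0.
  rewrite h0 sqrtr0 mul0r.
  by move/eqP: h0; rewrite paddr_eq0 ?sqr_ge0 // !sqrf_eq0 => /andP[/eqP-> /eqP->].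
set r := Num.sqrt _.
have rp : 0 < r by rewrite sqrtr_gt0 lt_def hn0 addr_ge0 ?sqr_ge0.
have r2 : r ^+ 2 = a ^+ 2 + b ^+ 2 by rewrite sqr_sqrtr // addr_ge0 ?sqr_ge0.
have a_r : -1 <= a / r <= 1.
  rewrite -ler_norml normrM normfV (gtr0_norm rp) ler_pdivrMr // mul1r.
  by rewrite -sqrtr_sqr /r ler_sqrt ?addr_ge0 ?sqr_ge0 // lerDl sqr_ge0.
have cos_acos_ar : cos (acos (a / r)) = a / r by rewrite acosK // in_itv.
have sin_acos_ar : sin (acos (a / r)) = `|b| / r.
  rewrite sin_acos //.
  have -> : 1 - (a / r) ^+ 2 = (b / r) ^+ 2.
    have r2_neq0 : r ^+ 2 != 0 by rewrite expf_neq0 // gt_eqF.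
    by apply: (mulIf r2_neq0); rewrite mulrBl !expr_div_n !divfK // r2 mul1r; ring.
  by rewrite sqrtr_sqr normrM normfV (gtr0_norm rp).
have polarE c s : c = a / r -> s = b / r -> r%:C * (c +i* s) = a +i* b.
  by move=> -> ->; simpc; rewrite ![r * _]mulrC !divfK ?gt_eqF.
rewrite /phase; case: ifP => b_ge0; apply: polarE.
- exact: cos_acos_ar.
- by rewrite sin_acos_ar ger0_norm.
- by rewrite cosN.
- by rewrite sinN sin_acos_ar ltr0_norm ?ltNge ?b_ge0 // mulNr opprK.
Qed.

Section Operators.
Context {R : realType}.

Lemma sum_ketbra_fiber {X I : finType} (f : I -> X) (phi : X -> vec R I) :
  (forall x p, f p != x -> phi x p = 0) ->
  forall p q, sum_ketbra phi p q =
    if f q == f p then phi (f p) p * (phi (f p) q)^* else 0.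
Proof.
move=> phi_fiber p q; rewrite /sum_ketbra (bigD1 (f p)) //= big1 ?addr0 => [|x].
  by case: eqP => // /eqP /phi_fiber ->; rewrite conjC0 mulr0.
by rewrite eq_sym => /phi_fiber ->; rewrite mul0r.
Qed.

Section Stabilizes.
Context {X Y : finType}.
Variable M : X -> Y -> bool.

Definition stabilizes (W : op R (X * Y)%type (X * Y)%type) : Prop :=
  forall p q, ~~ M p.1 p.2 -> M q.1 q.2 -> W p q = 0.

Lemma stabilizes_opmul W1 W2 :
  stabilizes W1 -> stabilizes W2 -> stabilizes (opmul W1 W2).
Proof.
move=> W1_st W2_st p q Mp Mq; rewrite /opmul big1 // => r _.
by case Mr: (M r.1 r.2); [rewrite W1_st ?Mr ?mul0r | rewrite W2_st ?Mr ?mulr0].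
Qed.

Lemma stabilizes_reflection (Z : finType) (phi : Z -> vec R (X * Y)%type) :
  (forall z p, ~~ M p.1 p.2 -> phi z p = 0) ->
  stabilizes (reflection (sum_ketbra phi)).
Proof.
move=> phi0 p q Mp Mq; rewrite /reflection /sum_ketbra /opid.
have -> : (p == q) = false by apply: contraNF Mp => /eqP ->.
by rewrite big1 ?mulr0 ?subr0 // => z _; rewrite phi0 ?mul0r.
Qed.

Lemma stabilizes_opapply W (psi : vec R (X * Y)%type) :
  stabilizes W -> (forall x y, psi (x, y) != 0 -> M x y) ->
  forall x y, opapply W psi (x, y) != 0 -> M x y.
Proof.
move=> W_st psi_supp x y; apply: contraNT => Mxy.
rewrite /opapply big1 // => -[x' y'] _.
have [Mq|nMq] := boolP (M x' y'); first by rewrite W_st ?mul0r.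
have [-> | /psi_supp] := eqVneq (psi (x', y')) 0; first by rewrite mulr0.
by rewrite (negbTE nMq).
Qed.

Lemma stabilizes_szegedy_W P Q (theta theta' : X -> Y -> R) :
  (forall x y, ~~ M x y -> P x y = 0 /\ Q y x = 0) ->
  stabilizes (szegedy_W P Q theta theta').
Proof.
move=> PQ0; apply: stabilizes_opmul; apply: stabilizes_reflection => z [x y] /= /PQ0 [P0 Q0].
  by rewrite /sz_psi; case: eqP => //= <-; rewrite Q0 sqrtr0 mul0r.
by rewrite /sz_phi; case: eqP => //= <-; rewrite P0 sqrtr0 mul0r.
Qed.

End Stabilizes.
End Operators.

Lemma U_eta_conjE {R : realType} {V E A : finType} (o : A -> V) (edge : A -> E)
    (W : op R (V * E)%type (V * E)%type) a b :
  opmul (adjoint (U_eta R o edge)) (opmul W (U_eta R o edge)) a b =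
  W (o a, edge a) (o b, edge b).
Proof.
rewrite /opmul /adjoint /U_eta (bigD1 (o a, edge a)) //= !eqxx /= oppr0 mul1r.
rewrite [X in _ + X]big1 ?addr0 => [|[v e] /=]; last first.
  by rewrite xpair_eqE => /negbTE ->; rewrite conjc_nat mul0r.
rewrite (bigD1 (o b, edge b)) //= !eqxx mulr1 big1 ?addr0 // => -[v e] /=.
by rewrite xpair_eqE => /negbTE ->; rewrite mulr0.
Qed.

Lemma flipflop_QWE {R : realType} {V A : finType} (o : A -> V) (rev : A -> A)
    (alpha : V -> vec R A) (revK : involutive rev) a b :
  flipflop_QW o rev alpha a b = coin o alpha (rev a) b.
Proof.
rewrite /flipflop_QW /opmul /shift (bigD1 (rev a)) //= revK eqxx mul1r.
rewrite big1 ?addr0 // => c; apply: contraNeq; rewrite mulf_eq0 negb_or => /andP[].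
by rewrite pnatr_eq0 eqb0 negbK => /eqP ->; rewrite revK.
Qed.

Lemma twice_sqr_sqrt_half (R : realType) :
  2 * ((Num.sqrt (1 / 2 : R))%:C * Num.conj (Num.sqrt (1 / 2 : R))%:C) = 1 :> R[i].
Proof.
by simpc; rewrite -expr2 sqr_sqrtr ?invr_ge0 ?ler0n // -[(1 + 1) * _]/(2 * 2^-1) divff ?pnatr_eq0.
Qed.

Section SubdivisionWalk.
Context {R : realType} {V E A : finType}.
Variables (o : A -> V) (rev : A -> A) (edge : A -> E).
Hypothesis graph : loopless_multigraph o rev edge.
Variable alpha : V -> vec R A.
Hypothesis alpha_unit : forall v, unit_vector_at o v (alpha v).

Local Notation incident := (sub_incident o edge).

Lemma o_rev_neq a : o (rev a) != o a. Proof. by case: graph. Qed.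

Lemma edge_rev a : edge (rev a) = edge a.
Proof. by case: graph => _ _ edgeP _; apply/esym/edgeP; right. Qed.

Lemma arc_inj {a b} : o a = o b -> edge a = edge b -> a = b.
Proof.
case: graph => _ noloop edgeP _ oab /edgeP [//|ba].
by move: (noloop a); rewrite -ba oab eqxx.
Qed.

Lemma incident_edge v a : incident v (edge a) = (v == o a) || (v == o (rev a)).
Proof.
case: graph => _ _ edgeP _; apply/existsP/orP => [[c /andP[/eqP <- /eqP]]|].
  by move=> /esym /edgeP [->|->]; [left | right].
by case=> /eqP ->; [exists a | exists (rev a)]; rewrite ?edge_rev !eqxx.
Qed.

Definition amplitude (v : V) (e : E) : R[i] :=
  if [pick a | (o a == v) && (edge a == e)] is Some a then alpha v a else 0.

Lemma amplitudeE a : amplitude (o a) (edge a) = alpha (o a) a.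
Proof.
rewrite /amplitude; case: pickP => [c /andP[/eqP oc /eqP ec]|/(_ a)].
  by rewrite (arc_inj oc ec).
by rewrite !eqxx.
Qed.

Lemma amplitude_nonincident v e : ~~ incident v e -> amplitude v e = 0.
Proof. by rewrite /amplitude; case: pickP => // c vce /existsP[]; exists c. Qed.

Lemma sum_sqr_amplitude v : \sum_(e : E) `|amplitude v e| ^+ 2 = 1.
Proof.
case: (alpha_unit v) => _ <-; rewrite (partition_big edge predT) //=.
apply: eq_bigr => e _; rewrite /amplitude; case: pickP => [c /andP[/eqP oc /eqP ec]|none].
  rewrite (bigD1 c) /= ?oc ?ec ?eqxx // big1 ?addr0 // => a /andP[/andP[/eqP oa /eqP ea]].
  by rewrite (arc_inj (etrans oa (esym oc)) (etrans ea (esym ec))) eqxx.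
by rewrite normr0 expr0n big1 // => a; rewrite none.
Qed.

Definition subdiv_P (v : V) (e : E) : R :=
  complex.Re (amplitude v e) ^+ 2 + complex.Im (amplitude v e) ^+ 2.
Definition subdiv_theta (v : V) (e : E) : R := carg (amplitude v e).
Definition subdiv_Q (e : E) (v : V) : R := if incident v e then 1 / 2 else 0.
Definition subdiv_theta' (v : V) (e : E) : R := 0.

Lemma subdiv_P_stochastic : right_stochastic subdiv_P.
Proof.
split=> [v e|v]; first by rewrite addr_ge0 ?sqr_ge0.
apply: (@complexI R); rewrite rmorph_sum rmorph1 -(sum_sqr_amplitude v).
by apply: eq_bigr => e _; apply: add_Re2_Im2.
Qed.

Lemma subdiv_Q_stochastic : right_stochastic subdiv_Q.
Proof.
split=> [e v|e]; first by rewrite /subdiv_Q; case: ifP => _; lra.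
case: graph => _ _ _ /(_ e) [a <-].
rewrite (bigD1 (o a)) //= (bigD1 (o (rev a))) /= ?o_rev_neq // big1 ?addr0.
  by rewrite /subdiv_Q !incident_edge !eqxx /= orbT; lra.
by move=> v /andP[va vra]; rewrite /subdiv_Q incident_edge (negbTE va) (negbTE vra).
Qed.

Lemma subdiv_PQ_nonincident v e : ~~ incident v e -> subdiv_P v e = 0 /\ subdiv_Q e v = 0.
Proof.
move=> nve; rewrite /subdiv_P /subdiv_Q amplitude_nonincident // (negbTE nve).
by rewrite expr0n addr0.
Qed.

Lemma sz_phi_subdiv v p :
  sz_phi subdiv_P subdiv_theta v p = if p.1 == v then amplitude v p.2 else 0.
Proof. by rewrite /sz_phi polar_form. Qed.

Lemma sz_psi_subdiv e p :
  sz_psi subdiv_Q subdiv_theta' e p =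
  if (p.2 == e) && incident p.1 e then (Num.sqrt (1 / 2 : R))%:C else 0.
Proof.
rewrite /sz_psi /subdiv_Q /subdiv_theta' /phase cos0 sin0 mulr1.
by case: eqP => //= _; case: incident; rewrite ?sqrtr0.
Qed.

Local Notation R0 := (reflection (sum_ketbra (sz_phi subdiv_P subdiv_theta))).
Local Notation R1 := (reflection (sum_ketbra (sz_psi subdiv_Q subdiv_theta'))).

Lemma R1E p q :
  R1 p q = ((q.2 == p.2) && incident p.1 p.2 && incident q.1 q.2)%:R - (p == q)%:R.
Proof.
rewrite /reflection /opid (sum_ketbra_fiber snd) => [|e r /negbTE]; last first.
  by rewrite sz_psi_subdiv => ->.
rewrite !sz_psi_subdiv !eqxx /=; case: eqP => [->|] /=; last by rewrite mulr0.
congr (_ - _); case: incident; case: incident => /=; rewrite ?twice_sqr_sqrt_half //.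
all: by rewrite -[Num.conj _]/(conjc _) ?mul0r ?conjc0 ?mulr0.
Qed.

Lemma R1_arc_row a r : R1 (o a, edge a) r = (r == (o (rev a), edge a))%:R.
Proof.
case: r => w f; rewrite R1E /= !xpair_eqE incident_edge !eqxx /=.
have [->|_] := eqVneq f (edge a); last by rewrite !andbF subrr.
rewrite incident_edge andbT; have [->|wa] := eqVneq w (o a).
  by rewrite eq_sym (negbTE (o_rev_neq a)) subrr.
by rewrite subr0 andbT.
Qed.

Lemma R0_arc_entry c b : R0 (o c, edge c) (o b, edge b) = coin o alpha c b.
Proof.
rewrite /reflection /opid (sum_ketbra_fiber fst) => [|v p /negbTE]; last first.
  by rewrite sz_phi_subdiv => ->.
rewrite !sz_phi_subdiv /= !eqxx /coin /grover_at xpair_eqE eq_sym.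
have [ocb|ocb] := eqVneq (o c) (o b); last first.
  by rewrite andFb mulr0 subr0.
have -> : (edge c == edge b) = (c == b) by apply/eqP/eqP => [|->//]; apply: arc_inj.
by rewrite amplitudeE ocb amplitudeE.
Qed.

Definition subdivision_walk := szegedy_W subdiv_P subdiv_Q subdiv_theta subdiv_theta'.

Lemma subdivision_walk_arcs a b :
  subdivision_walk (o a, edge a) (o b, edge b) = coin o alpha (rev a) b.
Proof.
rewrite /subdivision_walk /szegedy_W /opmul (bigD1 (o (rev a), edge a)) //=.
rewrite R1_arc_row eqxx mul1r -{1}(edge_rev a) R0_arc_entry big1 ?addr0 // => r.
by rewrite R1_arc_row => /negbTE ->; rewrite mul0r.
Qed.

End SubdivisionWalk.

Theorem theorem1 (R : realType) (V E A : finType)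
  (o : A -> V) (rev : A -> A) (edge : A -> E)
  (Hgraph : loopless_multigraph o rev edge)
  (alpha : V -> vec R A) (Halpha : forall v, unit_vector_at o v (alpha v)) :
  exists W : op R (V * E)%type (V * E)%type,
    is_extended_szegedy_W (sub_incident o edge) W /\
    (* W leaves H_{E(S(Gamma))} invariant, so W|_{H_{E(S(Gamma))}} makes sense *)
    (forall psi : vec R (V * E)%type, in_HES o edge psi -> in_HES o edge (opapply W psi)) /\
    (* U = U_eta^{-1} W|_{H_E(S)} U_eta ; U_eta^{-1} on H_{E(S)} is the adjoint *)
    flipflop_QW o rev alpha =
      opmul (adjoint (U_eta R o edge)) (opmul W (U_eta R o edge)).
Proof.
have nonincident := subdiv_PQ_nonincident o edge alpha.
exists (subdivision_walk o edge alpha); split; last split.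
- exists (subdiv_P o edge alpha), (subdiv_Q o edge), (subdiv_theta o edge alpha), subdiv_theta'.
  split=> //; first exact: subdiv_P_stochastic _ _ _ Hgraph _ Halpha.
  exact: subdiv_Q_stochastic _ _ _ Hgraph.
- by move=> psi; apply/stabilizes_opapply/stabilizes_szegedy_W.
have revK : involutive rev by case: Hgraph.
apply: functional_extensionality => a; apply: functional_extensionality => b.
by rewrite (flipflop_QWE _ _ _ revK) U_eta_conjE (subdivision_walk_arcs _ _ _ Hgraph).
Qed.
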